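(* For all $x\in\left[0,\frac{\pi_{6/5,3/2}}{4}\right)$, $$\sin_{6/5,3/2}(2x)=(\Theta\circ\Phi\circ\Psi)(\cos_{6/5,3/2}x),$$ where $$\Theta(x)=\left(\frac{2x}{1+x}\right)^{2/3},\qquad \Phi(x)=\frac{8\sqrt{x(3x+1)^3(1-x)}}{16x+(3x+1)^3(1-x)},\qquad \Psi(x)=\frac{2x^{3/5}}{1+x^{6/5}}.$$
   Context: For $0<q<\infty$ and $\frac{q}{q+1}<p<\infty$: let $F_{p,q}(y)=\int_0^y (1-t^q)^{-1/p}\,dt$ for $y\in[0,1)$ and $\pi_{p,q}=2\int_0^1(1-t^q)^{-1/p}\,dt$. The function $\sin_{p,q}:[0,\pi_{p,q}/2)\to[0,1)$ is the inverse of $F_{p,q}$ and $\cos_{p,q}x=\frac{d}{dx}\sin_{p,q}x$. Here $(p,q)=(6/5,3/2)$, so $\pi_{6/5,3/2}=2\int_0^1(1-t^{3/2})^{-5/6}\,dt<\infty$. *)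

From Stdlib Require Import Reals ClassicalEpsilon.
From Coquelicot Require Import Coquelicot.
Open Scope R_scope.

(* Real power x^a for x >= 0, with the convention 0^a = 0 (used only for a > 0
   or with positive base). *)
Definition rpow (x a : R) : R := if Rle_dec x 0 then 0 else Rpower x a.

Definition integrand_pq (p q t : R) : R := rpow (1 - rpow t q) (- / p).

Definition F_pq (p q y : R) : R := RInt (integrand_pq p q) 0 y.

Definition pi_pq (p q : R) : R :=
  2 * RInt_gen (integrand_pq p q) (at_point 0) (at_left 1).

Definition sin_pq (p q x : R) : R :=
  epsilon (inhabits 0) (fun y => 0 <= y < 1 /\ F_pq p q y = x).

(* cos_{p,q} x = d/dx sin_{p,q} x; taken as the right derivative, so that it is
   also meaningful at the endpoint x = 0 of the domain [0, pi_{p,q}/2). *)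
Definition cos_pq (p q x : R) : R :=
  epsilon (inhabits 0) (fun l =>
    filterlim (fun h => (sin_pq p q (x + h) - sin_pq p q x) / h)
              (at_right 0) (locally l)).

Definition Theta (x : R) : R := rpow (2 * x / (1 + x)) (2 / 3).
Definition Phi (x : R) : R :=
  8 * sqrt (x * (3 * x + 1) ^ 3 * (1 - x)) / (16 * x + (3 * x + 1) ^ 3 * (1 - x)).
Definition Psi (x : R) : R := 2 * rpow x (3 / 5) / (1 + rpow x (6 / 5)).

(* The substitution y = tau t := (4t/(1+t)^2)^(2/3) turns F_{6/5,3/2} into
   G t := F (tau t), with G' t = (8/3) (4t)^(-1/3) (1-t^2)^(-2/3).  For
   rho n := sqrt (n^2 (2-n^2)^3 / ((1-n^2) (1+n^2)^3)) one has
   G' (rho n) rho' n = 2 G' n: both sides are positive and their sixth powers are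
   equal rational functions of n.  Hence G (rho n) = 2 G n whenever 2n^2 < 1.
   Writing sin x = tau n, the derivative of the inverse function gives
   cos x = 1 / F' (tau n) = ((1-n)/(1+n))^(5/3), which Psi, Phi and Theta send in turn
   to (1-n^2)/(1+n^2), 2 rho n / (1 + (rho n)^2) and tau (rho n) = sin (2x).
   Since rho maps [0, 1/sqrt 2] onto [0, 1], F <= 2 G (1/sqrt 2) on [0, 1); this
   bounds pi_{6/5,3/2} / 4 by G (1/sqrt 2) and forces 2n^2 < 1 on the stated range. *)

From Stdlib Require Import Reals Lra Lia Psatz Classical ClassicalEpsilon.
From Coquelicot Require Import Coquelicot.
Open Scope R_scope.

(** * Real powers *)

Lemma rpow_Rpower (x a : R) : 0 < x -> rpow x a = Rpower x a.
Proof. intros Hx; unfold rpow; destruct (Rle_dec x 0); [lra | reflexivity]. Qed.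

Lemma rpow_nonpos (x a : R) : x <= 0 -> rpow x a = 0.
Proof. intros Hx; unfold rpow; destruct (Rle_dec x 0); [reflexivity | lra]. Qed.

Lemma rpow_gt0 (x a : R) : 0 < x -> 0 < rpow x a.
Proof. intros Hx; rewrite rpow_Rpower by exact Hx; apply exp_pos. Qed.

Lemma rpow_ge0 (x a : R) : 0 <= rpow x a.
Proof.
  destruct (Rle_dec x 0) as [Hx | Hx].
  - rewrite rpow_nonpos; lra.
  - left; apply rpow_gt0; lra.
Qed.

Lemma rpow_1l (a : R) : rpow 1 a = 1.
Proof. rewrite rpow_Rpower by lra; unfold Rpower; rewrite ln_1, Rmult_0_r; apply exp_0. Qed.

Lemma rpow_lt1 (x a : R) : 0 < a -> x < 1 -> rpow x a < 1.
Proof.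
  intros Ha Hx; destruct (Rle_dec x 0) as [Hx0 | Hx0].
  - rewrite rpow_nonpos; lra.
  - rewrite <- (rpow_1l a), !rpow_Rpower by lra; apply Rlt_Rpower_l; lra.
Qed.

Lemma rpow_le (x y a : R) : 0 <= a -> 0 <= x <= y -> rpow x a <= rpow y a.
Proof.
  intros Ha [[Hx | <-] Hxy].
  - rewrite !rpow_Rpower by lra; apply Rle_Rpower_l; lra.
  - rewrite (rpow_nonpos 0) by lra; apply rpow_ge0.
Qed.

Lemma rpow_rpow (x a b : R) : 0 <= x -> rpow (rpow x a) b = rpow x (a * b).
Proof.
  intros [Hx | <-].
  - rewrite (rpow_Rpower x a), (rpow_Rpower x), rpow_Rpower by (try apply exp_pos; lra).
    apply Rpower_mult.
  - rewrite !(rpow_nonpos 0); lra.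
Qed.

Lemma rpow_1r (x : R) : 0 <= x -> rpow x 1 = x.
Proof.
  intros [Hx | <-].
  - rewrite rpow_Rpower by lra; apply Rpower_1, Hx.
  - apply rpow_nonpos; lra.
Qed.

Lemma rpow_half (x : R) : 0 < x -> rpow x (/ 2) = sqrt x.
Proof. intros Hx; rewrite rpow_Rpower by exact Hx; apply Rpower_sqrt, Hx. Qed.

Lemma pow_rpow_opp_nat (x a : R) (n m : nat) :
  0 < x -> INR n * a = - INR m -> rpow x a ^ n = / x ^ m.
Proof.
  intros Hx Ha; rewrite rpow_Rpower by exact Hx.
  rewrite <- Rpower_pow by apply exp_pos.
  rewrite Rpower_mult, Rmult_comm, Ha, Rpower_Ropp, Rpower_pow by exact Hx.
  reflexivity.
Qed.

Lemma pow_inj_pos (a b : R) (n : nat) :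
  (0 < n)%nat -> 0 < a -> 0 < b -> a ^ n = b ^ n -> a = b.
Proof.
  intros Hn Ha Hb Hab; apply ln_inv; [exact Ha | exact Hb |].
  apply (Rmult_eq_reg_l (INR n)); [| apply not_0_INR; lia].
  rewrite <- !ln_pow by assumption; now f_equal.
Qed.

Lemma is_derive_rpow (x a : R) : 0 < x -> is_derive (fun y => rpow y a) x (a * rpow x (a - 1)).
Proof.
  intros Hx; rewrite (rpow_Rpower x) by exact Hx.
  apply is_derive_ext_loc with (fun y => Rpower y a).
  - exists (mkposreal x Hx); intros y Hy.
    apply Rabs_lt_between' in Hy; simpl in Hy.
    symmetry; apply rpow_Rpower; lra.
  - apply is_derive_Reals, derivable_pt_lim_power, Hx.
Qed.

Lemma continuous_rpow_gt0 (x a : R) : 0 < x -> continuous (fun y => rpow y a) x.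
Proof.
  intros Hx; apply (@ex_derive_continuous R_AbsRing R_NormedModule).
  eexists; apply is_derive_rpow, Hx.
Qed.

Lemma continuous_rpow_0 (a : R) : 0 < a -> continuous (fun y => rpow y a) 0.
Proof.
  intros Ha; apply continuity_pt_filterlim; intros eps Heps.
  exists (Rpower eps (/ a)); split; [apply exp_pos |].
  intros y [_ Hy]; simpl in *; unfold R_dist in *.
  rewrite (rpow_nonpos 0), Rminus_0_r in * by lra.
  destruct (Rle_dec y 0) as [Hy0 | Hy0].
  - rewrite rpow_nonpos, Rabs_R0 by exact Hy0; exact Heps.
  - rewrite Rabs_pos_eq in Hy by lra.
    rewrite Rabs_pos_eq by apply rpow_ge0.
    rewrite rpow_Rpower by lra.
    replace eps with (Rpower (Rpower eps (/ a)) a)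
      by (rewrite Rpower_mult, Rinv_l, Rpower_1; lra).
    apply Rlt_Rpower_l; lra.
Qed.

Lemma continuous_rpow (x a : R) : 0 < a -> continuous (fun y => rpow y a) x.
Proof.
  intros Ha; destruct (Rtotal_order x 0) as [Hx | [-> | Hx]].
  - apply continuous_ext_loc with (fun _ => 0); [| apply continuous_const].
    assert (Hx' : 0 < - x) by lra.
    exists (mkposreal _ Hx'); intros y Hy.
    apply Rabs_lt_between' in Hy; simpl in Hy.
    symmetry; apply rpow_nonpos; lra.
  - apply continuous_rpow_0, Ha.
  - apply continuous_rpow_gt0, Hx.
Qed.

(** * Intermediate values, inverse functions and improper integrals *)

Lemma IVT_le (h : R -> R) (a b z : R) :
  a <= b -> (forall t, a <= t <= b -> continuity_pt h t) -> h a <= z <= h b ->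
  exists t, a <= t <= b /\ h t = z.
Proof.
  intros Hab Hh [Ha Hb].
  destruct (Req_dec (h a) z) as [Ea | Ea]; [exists a; split; [lra | exact Ea] |].
  destruct (Req_dec (h b) z) as [Eb | Eb]; [exists b; split; [lra | exact Eb] |].
  destruct (Ranalysis5.IVT_interv (fun t => h t - z) a b) as [t [Ht Hz]]; try lra.
  - intros t Ht; apply continuity_pt_minus; [apply Hh, Ht | apply continuity_pt_const].
    intros u v; reflexivity.
  - destruct (Req_dec a b) as [<- | ]; lra.
  - exists t; split; [exact Ht | lra].
Qed.

Lemma eq_of_is_derive_0 (h : R -> R) (a b : R) :
  a <= b -> (forall t, a < t < b -> is_derive h t 0) ->
  (forall t, a <= t <= b -> continuity_pt h t) -> h b = h a.
Proof.
  intros Hab Hd Hc.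
  destruct (MVT_gen h a b (fun _ => 0)) as [c [_ Hm]].
  - intros t; rewrite Rmin_left, Rmax_right by exact Hab; apply Hd.
  - intros t; rewrite Rmin_left, Rmax_right by exact Hab; apply Hc.
  - lra.
Qed.

Lemma lt_of_is_derive_gt0 (h dh : R -> R) (a b : R) :
  a < b -> (forall t, a <= t <= b -> is_derive h t (dh t) /\ 0 < dh t) -> h a < h b.
Proof.
  intros Hab Hd.
  destruct (MVT_gen h a b dh) as [c [Hc Hm]].
  - intros t; rewrite Rmin_left, Rmax_right by lra; intros Ht; apply Hd; lra.
  - intros t; rewrite Rmin_left, Rmax_right by lra; intros Ht.
    apply continuity_pt_filterlim, (@ex_derive_continuous R_AbsRing R_NormedModule).
    eexists; apply Hd, Ht.
  - rewrite Rmin_left, Rmax_right in Hc by lra.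
    assert (0 < dh c) by apply Hd, Hc; nra.
Qed.

Lemma filterlim_difference_quotient (h : R -> R) (y d : R) :
  is_derive h y d -> filterlim (fun k => (h (y + k) - h y) / k) (locally' 0) (locally d).
Proof.
  intros Hd; apply is_derive_Reals in Hd.
  apply filterlim_locally; intros eps.
  destruct (Hd eps (cond_pos eps)) as [delta Hdelta].
  exists delta; intros k Hk Hk0.
  apply (Hdelta k Hk0).
  change (Rabs (k - 0) < delta) in Hk; rewrite Rminus_0_r in Hk; exact Hk.
Qed.

Lemma right_derivative_inverse (h g : R -> R) (x d : R) :
  d <> 0 -> is_derive h (g x) d -> h (g x) = x ->
  at_right 0 (fun e => h (g (x + e)) = x + e /\ g (x + e) <> g x) ->
  filterlim (fun e => g (x + e)) (at_right 0) (locally (g x)) ->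
  filterlim (fun e => (g (x + e) - g x) / e) (at_right 0) (locally (/ d)).
Proof.
  intros Hd0 Hd Hx Hinv Hg.
  set (k := fun e => g (x + e) - g x).
  assert (Hk : filterlim k (at_right 0) (locally' 0)).
  { intros P [eps HP]; unfold filtermap.
    generalize (filter_and _ _ (proj1 (filterlim_locally _ _) Hg eps) Hinv).
    apply filter_imp; intros e [He [_ Hne]].
    apply HP; [| unfold k; lra].
    change (Rabs (k e - 0) < eps); unfold k; rewrite Rminus_0_r; exact He. }
  assert (Hquot := filterlim_comp _ _ _ _ _ _ _ _ Hk (filterlim_difference_quotient h (g x) d Hd)).
  assert (Hinvquot := filterlim_comp _ _ _ _ _ _ _ _ Hquot (continuous_Rinv d Hd0)).
  refine (filterlim_ext_loc _ _ _ Hinvquot).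
  destruct Hinv as [eps Hinv]; exists eps; intros e Heps Hpos.
  destruct (Hinv e Heps Hpos) as [He Hne]; simpl; unfold k.
  replace (g x + (g (x + e) - g x)) with (g (x + e)) by ring.
  rewrite He, Hx; field; split; [lra |].
  intros Habs; apply Hne; lra.
Qed.

Lemma RInt_le_upper (f : R -> R) (a b y1 y2 : R) :
  (forall t, a <= t < b -> 0 <= f t) -> (forall y, a <= y < b -> ex_RInt f a y) ->
  a <= y1 <= y2 -> y2 < b -> RInt f a y1 <= RInt f a y2.
Proof.
  intros Hf Hex Hy Hy2.
  assert (H12 : ex_RInt f y1 y2) by (apply (ex_RInt_Chasles_2 f a); [lra | apply Hex; lra]).
  rewrite <- (RInt_Chasles f a y1 y2) by first [exact H12 | apply Hex; lra].
  assert (0 <= RInt f y1 y2) by (apply RInt_ge_0; [lra | exact H12 | intros t Ht; apply Hf; lra]).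
  simpl; unfold plus; simpl; lra.
Qed.

Lemma is_RInt_gen_at_left_lub (f : R -> R) (a b M : R) :
  (forall t, a <= t < b -> 0 <= f t) -> (forall y, a <= y < b -> ex_RInt f a y) ->
  is_lub (fun z => exists y, a <= y < b /\ z = RInt f a y) M ->
  is_RInt_gen f (at_point a) (at_left b) M.
Proof.
  intros Hf Hex [Hub Hlub] P [eps HP].
  assert (Hy1 : exists y1, a <= y1 < b /\ M - eps < RInt f a y1).
  { apply NNPP; intros Hnot.
    assert (M <= M - eps); [| generalize (cond_pos eps); lra].
    apply Hlub; intros z [y [Hy ->]].
    apply Rnot_lt_le; intros Hlt; apply Hnot; exists y; split; assumption. }
  destruct Hy1 as [y1 [Hy1 Hy1M]].
  apply Filter_prod with (fun u => u = a) (fun v => y1 < v < b); [reflexivity | |].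
  - assert (Hb1 : 0 < b - y1) by lra.
    exists (mkposreal _ Hb1); intros v Hv Hvb.
    apply Rabs_lt_between' in Hv; simpl in Hv; lra.
  - intros u v -> Hv; exists (RInt f a v); split.
    + apply (@RInt_correct R_CompleteNormedModule), Hex; lra.
    + apply HP; change (Rabs (RInt f a v - M) < eps); apply Rabs_lt_between'.
      assert (RInt f a v <= M) by (apply Hub; exists v; split; [lra | reflexivity]).
      generalize (RInt_le_upper f a b y1 v Hf Hex ltac:(lra) ltac:(lra)) (cond_pos eps); lra.
Qed.

Lemma RInt_gen_at_left_le (f : R -> R) (a b B : R) :
  a < b -> (forall t, a <= t < b -> 0 <= f t) -> (forall y, a <= y < b -> ex_RInt f a y) ->
  (forall y, a <= y < b -> RInt f a y <= B) ->
  RInt_gen f (at_point a) (at_left b) <= B.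
Proof.
  intros Hab Hf Hex HB.
  set (E := fun z => exists y, a <= y < b /\ z = RInt f a y).
  assert (HEB : forall z, E z -> z <= B) by (intros z [y [Hy ->]]; apply HB, Hy).
  assert (HEa : E (RInt f a a)) by (exists a; split; [lra | reflexivity]).
  destruct (completeness E (ex_intro _ B HEB) (ex_intro _ _ HEa)) as [M HM].
  rewrite (is_RInt_gen_unique f M (is_RInt_gen_at_left_lub f a b M Hf Hex HM)).
  apply HM; exact HEB.
Qed.

(** * Generalized sine and cosine *)

Section GeneralizedSine.

Variables p q : R.
Hypothesis q_gt0 : 0 < q.

Lemma integrand_pq_gt0 (t : R) : t < 1 -> 0 < integrand_pq p q t.
Proof. intros Ht; apply rpow_gt0; generalize (rpow_lt1 t q q_gt0 Ht); lra. Qed.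

Lemma continuous_integrand_pq (t : R) : t < 1 -> continuous (integrand_pq p q) t.
Proof.
  intros Ht; apply (continuous_comp (fun t => 1 - rpow t q) (fun z => rpow z (- / p))).
  - apply (@continuous_minus R_UniformSpace R_AbsRing R_NormedModule).
    + apply continuous_const.
    + apply continuous_rpow, q_gt0.
  - apply continuous_rpow_gt0; generalize (rpow_lt1 t q q_gt0 Ht); lra.
Qed.

Lemma ex_RInt_integrand_pq (a b : R) : a < 1 -> b < 1 -> ex_RInt (integrand_pq p q) a b.
Proof.
  intros Ha Hb; apply (@ex_RInt_continuous R_CompleteNormedModule).
  intros t Ht; apply continuous_integrand_pq.
  generalize (Rmax_lub_lt a b 1 Ha Hb); lra.
Qed.

Lemma is_derive_F_pq (y : R) : y < 1 -> is_derive (F_pq p q) y (integrand_pq p q y).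
Proof.
  intros Hy; apply (@is_derive_RInt R_CompleteNormedModule _ _ 0).
  - assert (H1y : 0 < 1 - y) by lra.
    exists (mkposreal _ H1y); intros b Hb.
    apply Rabs_lt_between' in Hb; simpl in Hb.
    apply RInt_correct, ex_RInt_integrand_pq; lra.
  - apply continuous_integrand_pq, Hy.
Qed.

Lemma continuity_pt_F_pq (y : R) : y < 1 -> continuity_pt (F_pq p q) y.
Proof.
  intros Hy; apply continuity_pt_filterlim, (@ex_derive_continuous R_AbsRing R_NormedModule).
  eexists; apply is_derive_F_pq, Hy.
Qed.

Lemma F_pq_lt (a b : R) : a < b -> b < 1 -> F_pq p q a < F_pq p q b.
Proof.
  intros Hab Hb; apply (lt_of_is_derive_gt0 _ (integrand_pq p q)); [exact Hab |].
  intros t Ht; split; [apply is_derive_F_pq | apply integrand_pq_gt0]; lra.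
Qed.

Lemma F_pq_le (a b : R) : a <= b -> b < 1 -> F_pq p q a <= F_pq p q b.
Proof. intros [Hab | <-] Hb; [left; apply F_pq_lt | right]; auto. Qed.

Lemma F_pq_0 : F_pq p q 0 = 0.
Proof. unfold F_pq; rewrite RInt_point; reflexivity. Qed.

Lemma sin_pq_F_pq (y : R) : 0 <= y < 1 -> sin_pq p q (F_pq p q y) = y.
Proof.
  intros Hy; unfold sin_pq.
  set (Inv := fun z => 0 <= z < 1 /\ F_pq p q z = F_pq p q y).
  destruct (epsilon_spec (inhabits 0) Inv (ex_intro Inv y (conj Hy eq_refl))) as [Hz Ez].
  fold Inv; set (z := epsilon _ Inv) in *.
  destruct (Rtotal_order z y) as [Hzy | [Hzy | Hzy]]; [| exact Hzy |].
  - generalize (F_pq_lt z y Hzy (proj2 Hy)); lra.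
  - generalize (F_pq_lt y z Hzy (proj2 Hz)); lra.
Qed.

Lemma sin_pq_spec (b z : R) : b < 1 -> 0 <= z <= F_pq p q b ->
  0 <= sin_pq p q z <= b /\ F_pq p q (sin_pq p q z) = z.
Proof.
  intros Hb Hz.
  assert (Hb0 : 0 <= b).
  { destruct (Rle_lt_dec 0 b) as [H | H]; [exact H |].
    generalize (F_pq_lt b 0 H ltac:(lra)); rewrite F_pq_0; lra. }
  destruct (IVT_le (F_pq p q) 0 b z Hb0) as [y [Hy <-]].
  - intros t Ht; apply continuity_pt_F_pq; lra.
  - rewrite F_pq_0; exact Hz.
  - rewrite sin_pq_F_pq by lra; split; [exact Hy | reflexivity].
Qed.

Lemma sin_pq_at_right (b x e : R) : b < 1 -> 0 <= x < F_pq p q b -> 0 < e ->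
  at_right 0 (fun h => F_pq p q (sin_pq p q (x + h)) = x + h /\
                       sin_pq p q x < sin_pq p q (x + h) < sin_pq p q x + e).
Proof.
  intros Hb Hx He.
  destruct (sin_pq_spec b x Hb ltac:(lra)) as [HS HFS].
  set (S := sin_pq p q x) in *.
  set (e' := Rmin e ((1 - S) / 2)).
  assert (He' : 0 < e' <= e).
  { split; [apply Rmin_pos; lra | apply Rmin_l]. }
  assert (HSe : S + e' < 1) by (generalize (Rmin_r e ((1 - S) / 2)); fold e'; lra).
  assert (HFe : x < F_pq p q (S + e')) by (rewrite <- HFS; apply F_pq_lt; lra).
  assert (Hdelta : 0 < Rmin (F_pq p q b - x) (F_pq p q (S + e') - x)) by (apply Rmin_pos; lra).
  exists (mkposreal _ Hdelta); intros h Hh Hpos; simpl in Hh, Hpos.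
  change (Rabs (h - 0) < Rmin (F_pq p q b - x) (F_pq p q (S + e') - x)) in Hh.
  rewrite Rminus_0_r, Rabs_pos_eq in Hh by lra.
  generalize (Rmin_l (F_pq p q b - x) (F_pq p q (S + e') - x))
             (Rmin_r (F_pq p q b - x) (F_pq p q (S + e') - x)); intros Hh1 Hh2.
  destruct (sin_pq_spec b (x + h) Hb ltac:(lra)) as [Hy HFy].
  split; [exact HFy | split].
  - destruct (Rlt_le_dec S (sin_pq p q (x + h))) as [H | H]; [exact H |].
    generalize (F_pq_le _ _ H ltac:(lra)); lra.
  - destruct (Rlt_le_dec (sin_pq p q (x + h)) (S + e')) as [H | H]; [lra |].
    generalize (F_pq_le _ _ H ltac:(lra)); lra.
Qed.

Lemma cos_pq_sin_pq (b x : R) : b < 1 -> 0 <= x < F_pq p q b ->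
  cos_pq p q x = / integrand_pq p q (sin_pq p q x).
Proof.
  intros Hb Hx.
  destruct (sin_pq_spec b x Hb ltac:(lra)) as [HS HFS].
  assert (Hlim : filterlim (fun h => (sin_pq p q (x + h) - sin_pq p q x) / h)
                   (at_right 0) (locally (/ integrand_pq p q (sin_pq p q x)))).
  { apply (right_derivative_inverse (F_pq p q)).
    - apply Rgt_not_eq, integrand_pq_gt0; lra.
    - apply is_derive_F_pq; lra.
    - exact HFS.
    - generalize (sin_pq_at_right b x 1 Hb Hx Rlt_0_1); apply filter_imp.
      intros h [Hh Hlt]; split; [exact Hh | lra].
    - apply filterlim_locally; intros eps.
      generalize (sin_pq_at_right b x eps Hb Hx (cond_pos eps)); apply filter_imp.
      intros h [_ Hlt]; change (Rabs (sin_pq p q (x + h) - sin_pq p q x) < eps).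
      rewrite Rabs_pos_eq; lra. }
  unfold cos_pq.
  apply (filterlim_locally_unique _ _ _
           (epsilon_spec (inhabits 0) (fun l => filterlim _ _ (locally l))
              (ex_intro _ (/ integrand_pq p q (sin_pq p q x)) Hlim)) Hlim).
Qed.

End GeneralizedSine.

(** * The case (p, q) = (6/5, 3/2) *)

Local Notation f := (integrand_pq (6 / 5) (3 / 2)).
Local Notation F := (F_pq (6 / 5) (3 / 2)).

Definition tau_base (t : R) : R := 4 * t / (1 + t) ^ 2.
Definition tau (t : R) : R := rpow (tau_base t) (2 / 3).
Definition tau_integrand (t : R) : R := 8 / 3 * rpow (4 * t * (1 - t ^ 2) ^ 2) (- / 3).

Lemma tau_base_gt0 (t : R) : 0 < t -> 0 < tau_base t.
Proof. intros Ht; apply Rdiv_lt_0_compat; [lra | apply pow_lt; lra]. Qed.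

Lemma tau_base_ge0 (t : R) : 0 <= t -> 0 <= tau_base t.
Proof. intros [Ht | <-]; [left; apply tau_base_gt0, Ht | unfold tau_base; lra]. Qed.

Lemma one_sub_tau_base (t : R) : -1 < t -> 1 - tau_base t = ((1 - t) / (1 + t)) ^ 2.
Proof. intros Ht; unfold tau_base; field; lra. Qed.

Lemma tau_base_le (a b : R) : 0 <= a <= b -> b <= 1 -> tau_base a <= tau_base b.
Proof.
  intros Hab Hb.
  assert (E : tau_base b - tau_base a = 4 * (b - a) * (1 - a * b) / ((1 + a) ^ 2 * (1 + b) ^ 2))
    by (unfold tau_base; field; split; lra).
  assert (0 <= 4 * (b - a) * (1 - a * b) / ((1 + a) ^ 2 * (1 + b) ^ 2)); [| lra].
  apply Rmult_le_pos; [apply Rmult_le_pos; [lra | nra] |].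
  left; apply Rinv_0_lt_compat, Rmult_lt_0_compat; apply pow_lt; lra.
Qed.

Lemma tau_0 : tau 0 = 0.
Proof. apply rpow_nonpos; unfold tau_base; lra. Qed.

Lemma tau_1 : tau 1 = 1.
Proof. unfold tau, tau_base; replace (4 * 1 / (1 + 1) ^ 2) with 1 by field; apply rpow_1l. Qed.

Lemma tau_lt1 (t : R) : 0 <= t < 1 -> tau t < 1.
Proof.
  intros Ht; apply rpow_lt1; [lra |].
  assert (0 < ((1 - t) / (1 + t)) ^ 2) by (apply pow_lt, Rdiv_lt_0_compat; lra).
  rewrite <- one_sub_tau_base in *; lra.
Qed.

Lemma tau_le (a b : R) : 0 <= a <= b -> b <= 1 -> tau a <= tau b.
Proof.
  intros Hab Hb; apply rpow_le; [lra |].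
  split; [apply tau_base_ge0 | apply tau_base_le]; lra.
Qed.

Lemma rpow_tau (t : R) : 0 <= t -> rpow (tau t) (3 / 2) = tau_base t.
Proof.
  intros Ht; unfold tau; rewrite rpow_rpow by (apply tau_base_ge0, Ht).
  replace (2 / 3 * (3 / 2)) with 1 by field; apply rpow_1r, tau_base_ge0, Ht.
Qed.

Lemma continuous_tau (t : R) : -1 < t -> continuous tau t.
Proof.
  intros Ht; apply (continuous_comp tau_base (fun z => rpow z (2 / 3)));
    [| apply continuous_rpow; lra].
  apply (@ex_derive_continuous R_AbsRing R_NormedModule).
  unfold tau_base; auto_derive; nra.
Qed.

Lemma integrand_tau (t : R) : 0 <= t < 1 ->
  f (tau t) = rpow (((1 - t) / (1 + t)) ^ 2) (- / (6 / 5)).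
Proof. intros Ht; unfold integrand_pq; rewrite rpow_tau, one_sub_tau_base by lra; reflexivity. Qed.

Lemma tau_integrand_pow6 (t : R) : 0 < t < 1 ->
  tau_integrand t ^ 6 = (8 / 3) ^ 6 / (4 * t * (1 - t ^ 2) ^ 2) ^ 2.
Proof.
  intros Ht; unfold tau_integrand; rewrite Rpow_mult_distr.
  assert (0 < 4 * t * (1 - t ^ 2) ^ 2) by (apply Rmult_lt_0_compat; [lra | apply pow_lt; nra]).
  rewrite (pow_rpow_opp_nat _ _ 6 2) by (simpl; lra); reflexivity.
Qed.

Lemma is_derive_tau (t : R) : 0 < t ->
  is_derive tau t (4 * (1 - t) / (1 + t) ^ 3 * (2 / 3 * rpow (tau_base t) (2 / 3 - 1))).
Proof.
  intros Ht; apply (is_derive_comp (fun z => rpow z (2 / 3)) tau_base).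
  - apply is_derive_rpow, tau_base_gt0, Ht.
  - unfold tau_base; auto_derive; [nra | field; lra].
Qed.

Lemma is_derive_F_tau (t : R) : 0 < t < 1 -> is_derive (fun t => F (tau t)) t (tau_integrand t).
Proof.
  intros Ht.
  set (dtau := 4 * (1 - t) / (1 + t) ^ 3 * (2 / 3 * rpow (tau_base t) (2 / 3 - 1))).
  assert (Hdtau : 0 < dtau).
  { apply Rmult_lt_0_compat; [apply Rdiv_lt_0_compat; [lra | apply pow_lt; lra] |].
    apply Rmult_lt_0_compat; [lra | apply rpow_gt0, tau_base_gt0; lra]. }
  assert (Hf : 0 < f (tau t)) by (apply integrand_pq_gt0, tau_lt1; lra).
  replace (tau_integrand t) with (dtau * f (tau t)).
  { apply (is_derive_comp F tau); [apply is_derive_F_pq, tau_lt1; lra | apply is_derive_tau; lra]. }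
  (* Both sides are positive and their sixth powers are rational functions of t. *)
  apply (pow_inj_pos _ _ 6); [lia | apply Rmult_lt_0_compat; assumption | |].
  { apply Rmult_lt_0_compat; [lra | apply rpow_gt0, Rmult_lt_0_compat; [lra | apply pow_lt; nra]]. }
  assert (0 < tau_base t) by (apply tau_base_gt0; lra).
  assert (0 < ((1 - t) / (1 + t)) ^ 2) by (apply pow_lt, Rdiv_lt_0_compat; lra).
  rewrite tau_integrand_pow6 by lra.
  unfold dtau; rewrite integrand_tau by lra.
  rewrite !Rpow_mult_distr, (pow_rpow_opp_nat _ _ 6 2), (pow_rpow_opp_nat _ _ 6 5)
    by (simpl; lra).
  unfold tau_base; field; nra.
Qed.

Definition rho_sq (n : R) : R := n ^ 2 * (2 - n ^ 2) ^ 3 / ((1 - n ^ 2) * (1 + n ^ 2) ^ 3).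
Definition rho_sq_deriv (n : R) : R :=
  4 * n * (2 - n ^ 2) ^ 2 * (1 - 2 * n ^ 2) ^ 2 / ((1 - n ^ 2) ^ 2 * (1 + n ^ 2) ^ 4).
Definition rho (n : R) : R := sqrt (rho_sq n).

Lemma one_sub_rho_sq (n : R) : n ^ 2 < 1 ->
  1 - rho_sq n = (1 - 2 * n ^ 2) ^ 3 / ((1 - n ^ 2) * (1 + n ^ 2) ^ 3).
Proof. intros Hn; unfold rho_sq; field; repeat split; try apply pow_nonzero; intro; nra. Qed.

Lemma rho_sq_ge0 (n : R) : n ^ 2 < 1 -> 0 <= rho_sq n.
Proof.
  intros Hn; apply Rmult_le_pos.
  - apply Rmult_le_pos; [nra | apply pow_le; nra].
  - left; apply Rinv_0_lt_compat, Rmult_lt_0_compat; [lra | apply pow_lt; nra].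
Qed.

Lemma rho_sq_lt1 (n : R) : 2 * n ^ 2 < 1 -> rho_sq n < 1.
Proof.
  intros Hn.
  assert (0 < 1 - rho_sq n); [| lra].
  rewrite one_sub_rho_sq by nra.
  apply Rdiv_lt_0_compat; [apply pow_lt; lra | apply Rmult_lt_0_compat; [lra | apply pow_lt; nra]].
Qed.

Lemma rho_sq_gt0 (n : R) : 0 < n -> n ^ 2 < 1 -> 0 < rho_sq n.
Proof.
  intros Hn0 Hn; apply Rdiv_lt_0_compat.
  - apply Rmult_lt_0_compat; [nra | apply pow_lt; nra].
  - apply Rmult_lt_0_compat; [lra | apply pow_lt; nra].
Qed.

Lemma rho_pow2 (n : R) : n ^ 2 < 1 -> rho n ^ 2 = rho_sq n.
Proof. intros Hn; unfold rho; rewrite <- Rsqr_pow2; apply Rsqr_sqrt, rho_sq_ge0, Hn. Qed.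

Lemma rho_ge0 (n : R) : 0 <= rho n.
Proof. apply sqrt_pos. Qed.

Lemma rho_gt0 (n : R) : 0 < n -> n ^ 2 < 1 -> 0 < rho n.
Proof. intros Hn0 Hn; apply sqrt_lt_R0, rho_sq_gt0; assumption. Qed.

Lemma rho_lt1 (n : R) : 2 * n ^ 2 < 1 -> rho n < 1.
Proof.
  intros Hn; unfold rho; rewrite <- sqrt_1.
  apply sqrt_lt_1; [apply rho_sq_ge0; nra | lra | apply rho_sq_lt1, Hn].
Qed.

Lemma rho_0 : rho 0 = 0.
Proof. unfold rho; replace (rho_sq 0) with 0 by (unfold rho_sq; field); apply sqrt_0. Qed.

Lemma rho_sqrt_half : rho (sqrt (/ 2)) = 1.
Proof.
  unfold rho; replace (rho_sq (sqrt (/ 2))) with 1; [apply sqrt_1 |].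
  unfold rho_sq; rewrite <- Rsqr_pow2, Rsqr_sqrt by lra; field.
Qed.

Lemma continuous_rho (n : R) : n ^ 2 < 1 -> continuous rho n.
Proof.
  intros Hn; apply (continuous_comp rho_sq sqrt).
  - apply (@ex_derive_continuous R_AbsRing R_NormedModule).
    unfold rho_sq; auto_derive; apply Rgt_not_eq; repeat apply Rmult_lt_0_compat; nra.
  - apply continuity_pt_filterlim, continuity_pt_sqrt, rho_sq_ge0, Hn.
Qed.

Lemma is_derive_rho (n : R) : 0 < n -> n ^ 2 < 1 ->
  is_derive rho n (rho_sq_deriv n / (2 * rho n)).
Proof.
  intros Hn0 Hn; apply is_derive_sqrt; [| apply rho_sq_gt0; assumption].
  unfold rho_sq, rho_sq_deriv; auto_derive.
  - apply Rgt_not_eq; repeat apply Rmult_lt_0_compat; nra.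
  - field; repeat split; try apply pow_nonzero; intro; nra.
Qed.

Lemma tau_integrand_rho (n : R) : 0 < n -> 2 * n ^ 2 < 1 ->
  tau_integrand (rho n) * (rho_sq_deriv n / (2 * rho n)) = 2 * tau_integrand n.
Proof.
  intros Hn0 Hn.
  assert (Hr0 : 0 < rho n) by (apply rho_gt0; nra).
  assert (Hr1 : rho n < 1) by (apply rho_lt1, Hn).
  assert (Hd : 0 < rho_sq_deriv n).
  { apply Rdiv_lt_0_compat; [| apply Rmult_lt_0_compat; apply pow_lt; nra].
    apply Rmult_lt_0_compat; [| apply pow_lt; nra].
    apply Rmult_lt_0_compat; [lra | apply pow_lt; nra]. }
  assert (Hg : forall t, 0 < t < 1 -> 0 < tau_integrand t).
  { intros t Ht; apply Rmult_lt_0_compat; [lra |].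
    apply rpow_gt0, Rmult_lt_0_compat; [lra | apply pow_lt; nra]. }
  apply (pow_inj_pos _ _ 6); [lia | | |].
  - apply Rmult_lt_0_compat; [apply Hg; lra | apply Rdiv_lt_0_compat; lra].
  - apply Rmult_lt_0_compat; [lra | apply Hg; nra].
  - rewrite !Rpow_mult_distr, !tau_integrand_pow6 by nra.
    replace ((4 * rho n * (1 - rho n ^ 2) ^ 2) ^ 2)
      with (16 * rho n ^ 2 * (1 - rho n ^ 2) ^ 4) by ring.
    replace ((rho_sq_deriv n / (2 * rho n)) ^ 6) with (rho_sq_deriv n ^ 6 / (64 * (rho n ^ 2) ^ 3))
      by (field; lra).
    rewrite rho_pow2, one_sub_rho_sq by nra.
    unfold rho_sq, rho_sq_deriv; field; repeat split; try apply pow_nonzero; intro; nra.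
Qed.

Lemma continuous_F_tau (t : R) : 0 <= t < 1 -> continuous (fun t => F (tau t)) t.
Proof.
  intros Ht; apply (continuous_comp tau F); [apply continuous_tau; lra |].
  apply continuity_pt_filterlim, continuity_pt_F_pq; [lra | apply tau_lt1, Ht].
Qed.

Lemma F_tau_rho (n : R) : 0 <= n -> 2 * n ^ 2 < 1 -> F (tau (rho n)) = 2 * F (tau n).
Proof.
  intros Hn0 Hn.
  set (h := fun m => F (tau (rho m)) - 2 * F (tau m)).
  assert (Hh : h n = h 0).
  { apply eq_of_is_derive_0; [exact Hn0 | |].
    - intros m Hm; assert (2 * m ^ 2 < 1) by nra.
      replace 0 with (rho_sq_deriv m / (2 * rho m) * tau_integrand (rho m) - 2 * tau_integrand m)
        by (rewrite Rmult_comm, tau_integrand_rho by lra; ring).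
      apply (@is_derive_minus R_AbsRing R_NormedModule).
      + apply (is_derive_comp (fun t => F (tau t)) rho).
        * apply is_derive_F_tau; split; [apply rho_gt0 | apply rho_lt1]; nra.
        * apply is_derive_rho; nra.
      + apply (is_derive_scal (fun t => F (tau t))), is_derive_F_tau; nra.
    - intros m Hm; assert (2 * m ^ 2 < 1) by nra.
      apply continuity_pt_minus.
      + apply continuity_pt_filterlim, (continuous_comp rho (fun t => F (tau t))).
        * apply continuous_rho; nra.
        * apply continuous_F_tau; split; [apply rho_ge0 | apply rho_lt1; lra].
      + apply continuity_pt_scal, continuity_pt_filterlim, continuous_F_tau; nra. }
  unfold h in Hh; rewrite rho_0, tau_0, F_pq_0 in Hh; lra.
Qed.

Lemma sqrt_half_gt0 : 0 < sqrt (/ 2).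
Proof. apply sqrt_lt_R0; lra. Qed.

Lemma sqrt_half_pow2 : sqrt (/ 2) ^ 2 = / 2.
Proof. rewrite <- Rsqr_pow2; apply Rsqr_sqrt; lra. Qed.

Lemma tau_sqrt_half_lt1 : tau (sqrt (/ 2)) < 1.
Proof. apply tau_lt1; generalize sqrt_half_gt0 sqrt_half_pow2; nra. Qed.

Lemma F_le_twice_F_tau_sqrt_half (y : R) : 0 <= y < 1 -> F y <= 2 * F (tau (sqrt (/ 2))).
Proof.
  intros Hy; generalize sqrt_half_gt0 sqrt_half_pow2; intros Hh0 Hh2.
  destruct (IVT_le (fun m => tau (rho m)) 0 (sqrt (/ 2)) y) as [n [Hn Hny]]; [lra | | |].
  - intros m Hm; apply continuity_pt_filterlim, (continuous_comp rho tau).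
    + apply continuous_rho; nra.
    + apply continuous_tau; generalize (rho_ge0 m); lra.
  - rewrite rho_0, tau_0, rho_sqrt_half, tau_1; lra.
  - assert (Hn1 : n < sqrt (/ 2)).
    { destruct (Rle_lt_or_eq_dec _ _ (proj2 Hn)) as [H | ->]; [exact H |].
      rewrite rho_sqrt_half, tau_1 in Hny; lra. }
    rewrite <- Hny, F_tau_rho by nra.
    apply Rmult_le_compat_l, F_pq_le; [lra | lra | apply tau_le; nra | apply tau_lt1; nra].
Qed.

Lemma pi_pq_le : pi_pq (6 / 5) (3 / 2) <= 4 * F (tau (sqrt (/ 2))).
Proof.
  assert (RInt_gen f (at_point 0) (at_left 1) <= 2 * F (tau (sqrt (/ 2)))); [| unfold pi_pq; lra].
  apply RInt_gen_at_left_le; [lra | | |].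
  - intros t Ht; left; apply integrand_pq_gt0; lra.
  - intros y Hy; apply ex_RInt_integrand_pq; lra.
  - apply F_le_twice_F_tau_sqrt_half.
Qed.

Lemma sin_pq_eq_tau (x : R) : 0 <= x < F (tau (sqrt (/ 2))) ->
  exists n, 0 <= n /\ 2 * n ^ 2 < 1 /\ sin_pq (6 / 5) (3 / 2) x = tau n /\ F (tau n) = x.
Proof.
  intros Hx; generalize sqrt_half_gt0 sqrt_half_pow2; intros Hh0 Hh2.
  destruct (sin_pq_spec (6 / 5) (3 / 2) ltac:(lra) _ x tau_sqrt_half_lt1 ltac:(lra))
    as [HS HFS].
  destruct (IVT_le tau 0 (sqrt (/ 2)) (sin_pq (6 / 5) (3 / 2) x)) as [n [Hn HSn]]; [lra | | |].
  - intros t Ht; apply continuity_pt_filterlim, continuous_tau; lra.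
  - rewrite tau_0; exact HS.
  - rewrite <- HSn in HFS |- *; exists n; repeat split; [lra | | exact HFS].
    destruct (Rle_lt_or_eq_dec _ _ (proj2 Hn)) as [H | ->]; [nra | lra].
Qed.

Lemma Psi_inv_integrand_tau (n : R) : 0 <= n < 1 -> Psi (/ f (tau n)) = (1 - n ^ 2) / (1 + n ^ 2).
Proof.
  intros Hn; rewrite integrand_tau by exact Hn.
  set (u := (1 - n) / (1 + n)).
  assert (Hu : 0 < u) by (apply Rdiv_lt_0_compat; lra).
  assert (Hu2 : 0 < u ^ 2) by (apply pow_lt, Hu).
  replace (/ rpow (u ^ 2) (- / (6 / 5))) with (rpow (u ^ 2) (5 / 6)).
  2: { rewrite !rpow_Rpower by exact Hu2.
       replace (- / (6 / 5)) with (- (5 / 6)) by field.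
       rewrite Rpower_Ropp, Rinv_inv; reflexivity. }
  unfold Psi; rewrite !rpow_rpow by lra.
  replace (5 / 6 * (3 / 5)) with (/ 2) by field; replace (5 / 6 * (6 / 5)) with 1 by field.
  rewrite rpow_half, rpow_1r, sqrt_pow2 by lra.
  unfold u; field; split; nra.
Qed.

Lemma Phi_rho (n : R) : 0 <= n -> 2 * n ^ 2 < 1 ->
  Phi ((1 - n ^ 2) / (1 + n ^ 2)) = 2 * rho n / (1 + rho n ^ 2).
Proof.
  intros Hn0 Hn.
  set (a := (1 - n ^ 2) / (1 + n ^ 2)); set (k := 4 * (1 - n ^ 2) / (1 + n ^ 2)).
  assert (Hk : 0 < k) by (apply Rdiv_lt_0_compat; nra).
  assert (HP := rho_sq_ge0 n ltac:(nra)).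
  assert (Hnum : a * (3 * a + 1) ^ 3 * (1 - a) = k ^ 2 * rho_sq n).
  { unfold a, k, rho_sq; field; repeat split; try apply pow_nonzero; intro; nra. }
  assert (Hden : 16 * a + (3 * a + 1) ^ 3 * (1 - a) = 4 * k * (1 + rho_sq n)).
  { unfold a, k, rho_sq; field; repeat split; try apply pow_nonzero; intro; nra. }
  unfold Phi; fold a; rewrite Hnum, Hden, sqrt_mult, sqrt_pow2, rho_pow2 by nra.
  fold (rho n); field; lra.
Qed.

Lemma Theta_tau (r : R) : 0 <= r -> Theta (2 * r / (1 + r ^ 2)) = tau r.
Proof. intros Hr; unfold Theta, tau, tau_base; f_equal; field; split; nra. Qed.

Theorem theorem4p4 (x : R) :
  0 <= x < pi_pq (6 / 5) (3 / 2) / 4 ->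
  sin_pq (6 / 5) (3 / 2) (2 * x) =
  Theta (Phi (Psi (cos_pq (6 / 5) (3 / 2) x))).
Proof.
  intros Hx.
  assert (HxF : 0 <= x < F (tau (sqrt (/ 2)))) by (generalize pi_pq_le; lra).
  destruct (sin_pq_eq_tau x HxF) as [n [Hn0 [Hn [HSn HFn]]]].
  rewrite (cos_pq_sin_pq (6 / 5) (3 / 2) ltac:(lra) _ x tau_sqrt_half_lt1 HxF), HSn.
  rewrite Psi_inv_integrand_tau, Phi_rho, Theta_tau by (try apply rho_ge0; nra).
  rewrite <- HFn, <- F_tau_rho by assumption.
  apply sin_pq_F_pq; [lra | split; [apply rpow_ge0 | apply tau_lt1]].
  split; [apply rho_ge0 | apply rho_lt1, Hn].
Qed.
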